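(* Let $X$ be a $T_0$ space, $x\in X$ and $(x_i)_{i\in I}$ a net in $X$. Consider: (1) $(x_i)_{i\in I}$ $GSI_2$-converges to $x$. (2) For every $F\in X^{(<\omega)}$ with $F\ll_{I_2}x$ and every open set $U$ of $X$ with $F\subseteq U$, $x_i\in U$ eventually. Then (1) implies (2), and if $X$ is $QI_2$-continuous, then (1) and (2) are equivalent.
   Context: For a $T_0$ space $X$, the specialization order is $x\le y$ iff $x\in \mathrm{cl}\{y\}$; $\uparrow A=\{x: a\le x\text{ for some } a\in A\}$, $\uparrow x=\uparrow\{x\}$; $A^\uparrow$, $A^\downarrow$ are the sets of upper and lower bounds of $A$, and $A^\delta=(A^\uparrow)^\downarrow$. A nonempty subset $A$ of a space is irreducible if whenever $A\subseteq F_1\cup F_2$ with $F_1,F_2$ closed, $A\subseteq F_1$ or $A\subseteq F_2$. $X^{(<\omega)}$ is the set of nonempty finite subsets of $X$. $P_S(X)$ is the set of nonempty compact saturated (upper) subsets of $X$ with the upper Vietoris topology, basis $\{\square U: U\text{ open}\}$, $\square U=\{Q: Q\subseteq U\}$. A net is eventually in $U$ if from some index on all its terms lie in $U$. For $A\subseteq X$, $x\in X$, $A\ll_{I_2}x$ means: for every irreducible $D\subseteq X$ with $x\in D^\delta$, $A\cap\mathrm{cl}D\ne\emptyset$. For $x\in X$, $w(x)=\{\uparrow F: F\in X^{(<\omega)}, F\ll_{I_2}x\}$. $X$ is $QI_2$-continuous if for every $x$, $w(x)$ is irreducible in $P_S(X)$ and $\uparrow x=\bigcap w(x)$. A net $(x_i)_{i\in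 I}$ $GSI_2$-converges to $x$ if there exists $\mathcal F\subseteq X^{(<\omega)}$ with $\{\uparrow G: G\in\mathcal F\}$ irreducible in $P_S(X)$ such that (i) for every open $U$, if $\uparrow G\subseteq U$ for some $G\in\mathcal F$ then $x_i\in U$ eventually, and (ii) $\bigcap_{G\in\mathcal F}\uparrow G\subseteq\uparrow x$. *)

From HB Require Import structures.
From mathcomp Require Import all_boot all_order.
From mathcomp Require Import all_classical all_reals all_analysis.
Set Implicit Arguments. Unset Strict Implicit. Unset Printing Implicit Defensive.
Local Open Scope classical_set_scope.

Section Defs.
Variable X : topologicalType.

Definition spec_le (x y : X) : Prop := closure [set y] x.

Definition upset (A : set X) : set X :=
  [set y | exists2 a, A a & spec_le a y].

Definition upper_bounds (A : set X) : set X := [set y | forall a, A a -> spec_le a y].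
Definition lower_bounds (A : set X) : set X := [set y | forall a, A a -> spec_le y a].
Definition delta (A : set X) : set X := lower_bounds (upper_bounds A).

Definition saturated (Q : set X) : Prop := upset Q `<=` Q.

Definition fin_ne (F : set X) : Prop := finite_set F /\ F !=set0.

Definition irreducible (A : set X) : Prop :=
  A !=set0 /\
  forall F1 F2 : set X, closed F1 -> closed F2 ->
    A `<=` F1 `|` F2 -> A `<=` F1 \/ A `<=` F2.

Definition PS : set (set X) := [set Q | compact Q /\ Q !=set0 /\ saturated Q].

Definition box (U : set X) : set (set X) := [set Q | PS Q /\ Q `<=` U].

(* open sets of the upper Vietoris topology: unions of basic opens box U *)
Definition PS_open (W : set (set X)) : Prop :=
  W `<=` PS /\
  forall Q, W Q -> exists U : set X, [/\ open U, Q `<=` U & box U `<=` W].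

Definition PS_closed (C : set (set X)) : Prop :=
  C `<=` PS /\ PS_open (PS `\` C).

Definition PS_irreducible (A : set (set X)) : Prop :=
  A `<=` PS /\ A !=set0 /\
  forall C1 C2 : set (set X), PS_closed C1 -> PS_closed C2 ->
    A `<=` C1 `|` C2 -> A `<=` C1 \/ A `<=` C2.

Definition way_below_I2 (A : set X) (x : X) : Prop :=
  forall D : set X, irreducible D -> delta D x -> A `&` closure D !=set0.

Definition wI2 (x : X) : set (set X) :=
  [set Q | exists F, [/\ fin_ne F, way_below_I2 F x & Q = upset F]].

Definition QI2_continuous : Prop :=
  forall x : X, PS_irreducible (wI2 x) /\
                upset [set x] = \bigcap_(Q in wI2 x) Q.

Definition directed_set (I : Type) (le : I -> I -> Prop) : Prop :=
  [/\ (exists i : I, True), (forall i, le i i),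
      (forall i j k, le i j -> le j k -> le i k)
    & (forall i j, exists k, le i k /\ le j k)].

Definition eventually_in (I : Type) (le : I -> I -> Prop) (net : I -> X)
  (U : set X) : Prop :=
  exists i0, forall i, le i0 i -> U (net i).

Definition GSI2_converges (I : Type) (le : I -> I -> Prop) (net : I -> X)
  (x : X) : Prop :=
  exists FF : set (set X),
    [/\ (forall G, FF G -> fin_ne G),
        PS_irreducible [set Q | exists2 G, FF G & Q = upset G],
        (forall U : set X, open U -> (exists2 G, FF G & upset G `<=` U) ->
            eventually_in le net U)
      & \bigcap_(G in FF) upset G `<=` upset [set x]].

End Defs.

From mathcomp Require Import all_boot all_order.
From mathcomp Require Import all_classical all_reals all_analysis.
Local Open Scope classical_set_scope.

(* (1) -> (2) is a topological Rudin lemma argument.  If the net is not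
   eventually in an open U containing F, every set G of the witnessing family
   meets the closed set X \ U.  Zorn's lemma gives a minimal closed subset A of
   X \ U meeting every G, and irreducibility of {upset G} in P_S(X) makes A
   irreducible.  Every upper bound of A lies in the intersection of the upset G,
   hence above x, so x is in the delta of A; then F << x forces F to meet
   cl A = A, which is disjoint from U.  For (2) -> (1) under QI_2-continuity,
   the family of all F << x is itself a witness.  Neither T_0 nor directedness
   of the index set is needed. *)

Section RudinLemma.
Set Implicit Arguments.
Unset Strict Implicit.

Lemma finite_sub_bigcup_chain (T : eqType) (P : set T) (F : set (set T)) :
  finite_set P -> F !=set0 -> total_on F subset ->
  P `<=` \bigcup_(B in F) B -> exists2 B, F B & P `<=` B.
Proof.
move=> /finite_seqP [s ->] {P} F0 Ftot; elim: s => [|a s IH] sF.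
  by case: F0 => B FB; exists B => // y /=; rewrite in_nil.
have [B1 FB1 B1a] : (\bigcup_(B in F) B) a by apply: sF; rewrite /= in_cons eqxx.
have [B2 FB2 sB2] : exists2 B, F B & [set` s] `<=` B.
  by apply: IH => y sy; apply: sF; rewrite /= in_cons sy orbT.
have sub_both B : B1 `<=` B -> B2 `<=` B -> [set` a :: s] `<=` B.
  by move=> B1B B2B y; rewrite /= in_cons => /orP [/eqP -> | /sB2 /B2B //]; exact: B1B.
by have [sB12|sB21] := Ftot _ _ FB1 FB2; [exists B2 | exists B1] => //; apply: sub_both.
Qed.

Variable X : topologicalType.

Lemma spec_le_refl (y : X) : spec_le y y.
Proof. exact: subset_closure. Qed.

Lemma sub_upset (A : set X) : A `<=` upset A.
Proof. by move=> a Aa; exists a => //; apply: spec_le_refl. Qed.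

Lemma closed_spec_le (E : set X) (y z : X) : closed E -> E y -> spec_le z y -> E z.
Proof. by move=> cE Ey zy; apply: cE; apply: (closureS _ zy) => _ ->. Qed.

Lemma closed_upsetI_neq0 (E G : set X) :
  closed E -> upset G `&` E !=set0 -> G `&` E !=set0.
Proof. by move=> cE [y [[g Gg gy] Ey]]; exists g; split => //; exact: closed_spec_le gy. Qed.

Definition meets_all (FF : set (set X)) (A : set X) : Prop :=
  forall G, FF G -> G `&` A !=set0.

Definition hitting (E : set X) : set (set X) := [set Q | PS Q /\ Q `&` E !=set0].

Lemma hitting_closed (E : set X) : closed E -> PS_closed (hitting E).
Proof.
move=> cE; split=> [Q []//|]; split=> [Q []//|Q [PQ QnE]].
exists (~` E); split; first by rewrite openC.
  by move=> y Qy Ey; apply: QnE; split => //; exists y.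
by move=> Q' [PQ' sQ']; split => // -[_ [y [Q'y Ey]]]; exact: sQ' _ Q'y Ey.
Qed.

Lemma ex_minimal_closed_meets_all (FF : set (set X)) (C : set X) :
  (forall G, FF G -> finite_set G) -> closed C -> meets_all FF C ->
  exists A, [/\ closed A, A `<=` C, meets_all FF A &
    forall A', closed A' -> A' `<` A -> ~ meets_all FF A'].
Proof.
move=> FFfin cC CFF.
pose avoid B := open B /\ forall G, FF G -> ~ (G `&` C `<=` B).
have [B [[oB Bav] Bmax]] : exists B, avoid B /\ forall B', B `<` B' -> ~ avoid B'.
  apply: Zorn_bigcup => F Fav Ftot; split.
    by apply: bigcup_open => B /Fav [].
  move=> G FG GCF; have [g GCg] := CFF G FG.
  have F0 : F !=set0 by have [B FB _] := GCF g GCg; exists B.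
  have [B FB GCB] := finite_sub_bigcup_chain (finite_setIl _ (FFfin G FG)) F0 Ftot GCF.
  exact: (Fav B FB).2 G FG GCB.
exists (C `\` B); split.
- by apply: closedI => //; rewrite closedC.
- by move=> y [].
- move=> G FG; apply: contrapT => nGA; apply: (Bav G FG) => y [Gy Cy].
  by apply: contrapT => nBy; apply: nGA; exists y.
move=> A' cA' [sA'A nAA'] A'FF.
have [y [[Cy nBy] nA'y]] : exists y, (C `\` B) y /\ ~ A' y.
  by apply: contrapT => /forallNP nA; apply: nAA' => z Az; apply: contrapT => /(conj Az)/nA.
apply: (Bmax (B `|` ~` A')).
  by split => [z Bz|sub]; [left | exact: nBy (sub y (or_intror nA'y))].
split; first by apply: openU => //; rewrite openC.
move=> G FG sGC; have [g [Gg A'g]] := A'FF G FG.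
have [Cg nBg] := sA'A g A'g.
by case: (sGC g (conj Gg Cg)).
Qed.

Lemma minimal_closed_meets_all_irreducible (FF : set (set X)) (A : set X) :
  PS_irreducible [set Q | exists2 G, FF G & Q = upset G] ->
  closed A -> meets_all FF A ->
  (forall A', closed A' -> A' `<` A -> ~ meets_all FF A') -> irreducible A.
Proof.
move=> [sPS [[_ [G0 FG0 _]] FFirr]] cA AFF Amin.
split; first by have [g [_ Ag]] := AFF G0 FG0; exists g.
have missing E : closed E -> ~ A `<=` E -> exists2 G, FF G & ~ (G `&` (A `&` E) !=set0).
  move=> cE nAE; apply: contrapT => /forallPNP AEFF.
  apply: (Amin (A `&` E)); [exact: closedI | | ].
    by split=> [y []//|sAAE]; apply: nAE => y /sAAE [].
  by move=> G FG; apply: contrapT; apply: AEFF.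
move=> B1 B2 cB1 cB2 sAB; apply: contrapT => /not_orP [nAB1 nAB2].
have [G1 FG1 nG1] := missing B1 cB1 nAB1.
have [G2 FG2 nG2] := missing B2 cB2 nAB2.
have [] := FFirr (hitting (A `&` B1)) (hitting (A `&` B2)).
- by apply: hitting_closed; apply: closedI.
- by apply: hitting_closed; apply: closedI.
- move=> Q [G FG ->]; have PQ : PS (upset G) by apply: sPS; exists G.
  have [g [Gg Ag]] := AFF G FG.
  by case: (sAB g Ag) => Bg; [left|right]; split=> //; exists g; split=> //; apply: sub_upset.
- move=> /(_ (upset G1)) [|_ /closed_upsetI_neq0 h]; first by exists G1.
  by apply: nG1; apply: h; apply: closedI.
- move=> /(_ (upset G2)) [|_ /closed_upsetI_neq0 h]; first by exists G2.
  by apply: nG2; apply: h; apply: closedI.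
Qed.

Lemma topological_rudin (FF : set (set X)) (C : set X) :
  PS_irreducible [set Q | exists2 G, FF G & Q = upset G] ->
  (forall G, FF G -> finite_set G) -> closed C -> meets_all FF C ->
  exists A, [/\ irreducible A, closed A, A `<=` C & meets_all FF A].
Proof.
move=> FFirr FFfin cC CFF.
have [A [cA sAC AFF Amin]] := ex_minimal_closed_meets_all FFfin cC CFF.
by exists A; split => //; exact: minimal_closed_meets_all_irreducible FFirr cA AFF Amin.
Qed.

End RudinLemma.

Section GSI2Convergence.
Set Implicit Arguments.
Unset Strict Implicit.
Variables (X : topologicalType) (x : X).

Lemma meets_all_delta (FF : set (set X)) (A : set X) :
  meets_all FF A -> \bigcap_(G in FF) upset G `<=` upset [set x] -> delta A x.
Proof.
move=> AFF capx u Au; have [_ -> xu] : upset [set x] u.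
  by apply: capx => G FG; have [g [Gg Ag]] := AFF G FG; exists g => //; apply: Au.
exact: xu.
Qed.

Variables (I : Type) (le : I -> I -> Prop) (net : I -> X).

Lemma GSI2_converges_eventually_in (F U : set X) :
  GSI2_converges le net x -> way_below_I2 F x -> open U -> F `<=` U ->
  eventually_in le net U.
Proof.
move=> [FF [FFfin FFirr FFconv FFcap]] Fx oU FU; apply: FFconv => //.
apply: contrapT => /forallPNP nFFU.
have cCU : closed (~` U) by exact: open_closedC.
have CUFF : meets_all FF (~` U).
  move=> G FG; apply: closed_upsetI_neq0 => //; apply: contrapT => nGU.
  by apply: (nFFU G FG) => y Gy; apply: contrapT => nUy; apply: nGU; exists y.
have [A [irrA cA sAU AFF]] :=
  topological_rudin FFirr (fun G FG => (FFfin G FG).1) cCU CUFF.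
have [y [Fy clAy]] := Fx A irrA (meets_all_delta AFF FFcap).
by apply: (sAU y) (FU y Fy); rewrite ((closure_id A).1 cA).
Qed.

Lemma QI2_continuous_GSI2_converges :
  QI2_continuous X ->
  (forall F U : set X, fin_ne F -> way_below_I2 F x -> open U -> F `<=` U ->
     eventually_in le net U) ->
  GSI2_converges le net x.
Proof.
move=> /(_ x) [wirr wcap] wconv.
pose FF := [set F | fin_ne F /\ way_below_I2 F x].
have FFw : [set Q | exists2 G, FF G & Q = upset G] = wI2 x.
  by apply/seteqP; split => Q /= [G]; [case=> Gfin Gx -> | case=> Gfin Gx ->]; exists G.
exists FF; split; first by move=> G [].
- by rewrite FFw.
- move=> U oU [G [Gfin Gx] GU]; apply: (wconv G) => //.
  exact: subset_trans (@sub_upset X G) GU.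
- by move=> z Gz; rewrite wcap => _ [G [Gfin Gx ->]]; apply: Gz.
Qed.

End GSI2Convergence.

Theorem proposition4p6 (X : topologicalType) (hT0 : kolmogorov_space X)
  (x : X) (I : Type) (le : I -> I -> Prop) (hI : directed_set le)
  (net : I -> X) :
  let cond2 :=
    forall (F U : set X), fin_ne F -> way_below_I2 F x -> open U ->
      F `<=` U -> eventually_in le net U in
  (GSI2_converges le net x -> cond2) /\
  (QI2_continuous X -> (GSI2_converges le net x <-> cond2)).
Proof.
move=> cond2.
have conv_cond2 : GSI2_converges le net x -> cond2.
  by move=> conv F U _ Fx oU FU; exact: GSI2_converges_eventually_in conv Fx oU FU.
split=> // QI2; split=> //.
exact: QI2_continuous_GSI2_converges.
Qed.
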